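(* There exists a constant $C>0$ such that for all $\beta\in\mathbb R$ and all $N\in\mathbb N$, $$\sup_{x\in\Lambda_N}\int_0^\infty\mathsf P^N\big(X^{N,x}_t\in\Lambda_N\big)\,dt\le C\max\{1,N^{\beta-1}\}.$$
   Context: Fix $\alpha,\alpha_L,\alpha_R>0$. Let $\Lambda_N=\{1,\dots,N-1\}$, $\widehat\Lambda_N=\{0,\dots,N\}$. For $\beta\in\mathbb R$, $\{X^{N,x}_t:t\ge0\}$ (law $\mathsf P^N$) is the continuous-time random walk on $\widehat\Lambda_N$ started at $x$ with generator $A^Nf(x)=\mathbf 1_{\{x\in\Lambda_N\}}N^2\sum_{y\in\Lambda_N,|y-x|=1}\alpha(f(y)-f(x))+\mathbf 1_{\{x=1\}}N^{2-\beta}\alpha_L(f(0)-f(1))+\mathbf 1_{\{x=N-1\}}N^{2-\beta}\alpha_R(f(N)-f(N-1))$, i.e. it jumps between nearest neighbours of $\Lambda_N$ at rate $N^2\alpha$, jumps from $1$ to $0$ at rate $N^{2-\beta}\alpha_L$ and from $N-1$ to $N$ at rate $N^{2-\beta}\alpha_R$, and is absorbed at $0$ and $N$. The constant $C$ may depend on $\alpha,\alpha_L,\alpha_R$ but not on $\beta$, $N$, $x$. *)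

From HB Require Import structures.
From mathcomp Require Import all_boot all_order all_algebra.
From mathcomp Require Import all_classical all_reals all_analysis.
Set Implicit Arguments. Unset Strict Implicit. Unset Printing Implicit Defensive.
Import Order.TTheory GRing.Theory Num.Theory numFieldNormedType.Exports.
Local Open Scope ring_scope.

(* Lambda_N = {1,...,N-1}; states of hat Lambda_N = {0,...,N} are 'I_N.+1 *)
Definition inLam (N x : nat) : bool := (0 < x < N)%N.

(* jump rate from x to y (x <> y) read off the generator A^N *)
Definition rate (R : realType) (alpha alphaL alphaR beta : R) (N x y : nat) : R :=
  (if [&& inLam N x, inLam N y & (y == x.+1) || (x == y.+1)]
   then (N%:R) ^+ 2 * alpha else 0)
  + (if [&& inLam N x, x == 1%N & y == 0%N]
     then (N%:R) `^ (2 - beta) * alphaL else 0)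
  + (if [&& inLam N x, x == N.-1 & y == N]
     then (N%:R) `^ (2 - beta) * alphaR else 0).

Definition gen (R : realType) (alpha alphaL alphaR beta : R) (N : nat)
  : 'M[R]_N.+1 :=
  \matrix_(i, j)
    if i == j then - \sum_(k < N.+1 | k != i) rate alpha alphaL alphaR beta N i k
    else rate alpha alphaL alphaR beta N i j.

(* transition probabilities P^N(X^{N,x}_t = y) = (exp (t A^N))_{x y},
   the matrix exponential defined entrywise by its power series *)
Definition ptrans (R : realType) (alpha alphaL alphaR beta : R) (N : nat)
  (t : R) (x y : 'I_N.+1) : R :=
  limn (series (fun k : nat =>
    t ^+ k / (k`!)%:R * (gen alpha alphaL alphaR beta N ^+ k) x y)).
Arguments gen [R] alpha alphaL alphaR beta N.
Arguments ptrans [R] alpha alphaL alphaR beta N t x y.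

(* A drift (Lyapunov function) argument.  On Lambda_N let
     h(k) = k (N - k) / (2 N^2 alpha) + (N + 1) / 2 * N^(beta-2) (1/alphaL + 1/alphaR),
   and h = 0 at the absorbing points 0 and N.  Then h >= 0 and A^N h <= -1 on Lambda_N.
   The semigroup exp(t A^N) is entrywise nonnegative, because A^N has nonnegative
   off-diagonal entries, so g(t) = (exp(t A^N) h)(x) stays nonnegative while
   g'(t) = (exp(t A^N) A^N h)(x) <= - P(X_t in Lambda_N).  Integrating, the expected
   time spent in Lambda_N is at most g(0) = h(x) <= C max(1, N^(beta-1)). *)

From HB Require Import structures.
From mathcomp Require Import all_boot all_order all_algebra.
From mathcomp Require Import all_classical all_reals all_analysis.
From mathcomp Require Import ring lra zify.
Import Order.TTheory GRing.Theory Num.Theory numFieldNormedType.Exports.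
Local Open Scope ring_scope.

Section MatrixExponential.
Context {R : realType} {n : nat}.
Implicit Types (M : 'M[R]_n) (t : R).

Definition mxexp M t : 'M[R]_n :=
  \matrix_(i, j) limn (series (fun k => t ^+ k / (k`!)%:R * (M ^+ k) i j)).

Definition mx_l1norm M : R := \sum_i \sum_j `|M i j|.

Lemma mx_l1norm_ge0 M : 0 <= mx_l1norm M.
Proof. by do 2![apply: sumr_ge0 => ? _]. Qed.

Lemma col_l1norm_le M j : \sum_i `|M i j| <= mx_l1norm M.
Proof.
apply: ler_sum => i _.
by rewrite (bigD1 j) //= lerDl; apply: sumr_ge0.
Qed.

Lemma mxentry_norm_le M i j : `|M i j| <= mx_l1norm M.
Proof.
apply: le_trans (col_l1norm_le M j).
by rewrite (bigD1 i) //= lerDl; apply: sumr_ge0.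
Qed.

Lemma mxpow_entry_norm_le M k i j : `|(M ^+ k) i j| <= mx_l1norm M ^+ k.
Proof.
elim: k i j => [|k IHk] i j.
  by rewrite expr0 mxE; case: (i == j); rewrite ?normr1 ?normr0.
rewrite exprSr -mulmxE mxE; apply: le_trans (ler_norm_sum _ _ _) _.
apply: le_trans (_ : \sum_l mx_l1norm M ^+ k * `|M l j| <= _).
  by apply: ler_sum => l _; rewrite normrM ler_wpM2r.
rewrite -mulr_sumr exprSr ler_wpM2l ?col_l1norm_le //.
exact: exprn_ge0 (mx_l1norm_ge0 M).
Qed.

(* Power series coefficients of the p-th derivative of [t |-> mxexp M t i j]. *)
Definition mxexp_coef M p i j : R^nat := fun k => (M ^+ (k + p)) i j / (k`!)%:R.

Lemma mxexp_coef_series M t i j :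
  series (fun k => t ^+ k / (k`!)%:R * (M ^+ k) i j) = pseries (mxexp_coef M 0 i j) t.
Proof.
rewrite /pseries; congr (series _); apply: funext => k /=.
by rewrite /mxexp_coef addn0; ring.
Qed.

Lemma is_cvg_pseries_mxexp_coef M p i j K : cvgn (pseries (mxexp_coef M p i j) K).
Proof.
set c := mx_l1norm M; have c_ge0 : 0 <= c := mx_l1norm_ge0 M.
apply: normed_cvg.
apply: (@series_le_cvg _ _ (fun k => c ^+ p * exp_coeff (c * `|K|) k)).
- by move=> k; apply: normr_ge0.
- by move=> k; rewrite mulr_ge0 ?exprn_ge0 // divr_ge0 // exprn_ge0 // mulr_ge0.
- move=> k; rewrite /mxexp_coef /exp_coeff /= !normrM normfV normr_nat normrX exprMn.
  have -> : c ^+ p * (c ^+ k * `|K| ^+ k / k`!%:R) =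
      c ^+ (k + p) * (`|K| ^+ k / k`!%:R) by rewrite exprD; ring.
  by rewrite mulrAC -mulrA ler_wpM2r ?mxpow_entry_norm_le.
- have -> : (fun k => c ^+ p * exp_coeff (c * `|K|) k) =
      c ^+ p *: exp_coeff (c * `|K|) by [].
  exact/is_cvg_seriesZ/is_cvg_series_exp_coeff.
Qed.

Lemma cvg_mxexp M t i j :
  (series (fun k => t ^+ k / (k`!)%:R * (M ^+ k) i j) @ \oo --> mxexp M t i j)%classic.
Proof.
by rewrite mxE mxexp_coef_series; apply: is_cvg_pseries_mxexp_coef.
Qed.

Lemma pseries_diffs_mxexp_coef M p i j :
  pseries_diffs (mxexp_coef M p i j) = mxexp_coef M p.+1 i j.
Proof.
apply/funext => k; rewrite /pseries_diffs /mxexp_coef addSnnS factS natrM.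
have kfact_neq0 : k`!%:R != 0 :> R by rewrite pnatr_eq0 -lt0n fact_gt0.
by field; rewrite kfact_neq0 nat1r pnatr_eq0.
Qed.

Lemma is_derive_mxexp_entry M t i j : is_derive t 1 (fun s => mxexp M s i j)
  (limn (pseries (mxexp_coef M 1 i j) t)).
Proof.
under [fun s => _]funext => s do rewrite mxE mxexp_coef_series.
rewrite -pseries_diffs_mxexp_coef.
apply: (@pseries_snd_diffs _ _ (`|t| + 1)); rewrite ?pseries_diffs_mxexp_coef.
- exact: is_cvg_pseries_mxexp_coef.
- exact: is_cvg_pseries_mxexp_coef.
- exact: is_cvg_pseries_mxexp_coef.
- by rewrite [ltRHS]ger0_norm ?ltrDl // addr_ge0.
Qed.

Lemma mxexp_derivE_mulmxr M t i j :
  limn (pseries (mxexp_coef M 1 i j) t) = (mxexp M t *m M) i j.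
Proof.
apply: (cvg_lim (@Rhausdorff R)); rewrite mxE.
suff -> : pseries (mxexp_coef M 1 i j) t = fun m => \sum_l
    series (fun k => t ^+ k / (k`!)%:R * (M ^+ k) i l) m * M l j.
  apply: cvg_big => // [|l _]; first exact: add_continuous.
  by apply: cvgMr_tmp; apply: cvg_mxexp.
apply/funext => m; rewrite /pseries /series /=.
under [RHS]eq_bigr do rewrite big_distrl.
rewrite exchange_big /=.
apply: eq_bigr => k _; rewrite /mxexp_coef addn1 exprSr -mulmxE mxE !big_distrl /=.
by apply: eq_bigr => l _; ring.
Qed.

Lemma mxexp_derivE_mulmxl M t i j :
  limn (pseries (mxexp_coef M 1 i j) t) = (M *m mxexp M t) i j.
Proof.
apply: (cvg_lim (@Rhausdorff R)); rewrite mxE.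
suff -> : pseries (mxexp_coef M 1 i j) t = fun m => \sum_l
    M i l * series (fun k => t ^+ k / (k`!)%:R * (M ^+ k) l j) m.
  apply: cvg_big => // [|l _]; first exact: add_continuous.
  by apply: cvgMl_tmp; apply: cvg_mxexp.
apply/funext => m; rewrite /pseries /series /=.
under [RHS]eq_bigr do rewrite big_distrr.
rewrite exchange_big /=.
apply: eq_bigr => k _; rewrite /mxexp_coef addn1 exprS -mulmxE mxE !big_distrl /=.
by apply: eq_bigr => l _; ring.
Qed.

Lemma mxexp0 M : mxexp M 0 = 1%:M.
Proof.
apply/matrixP => i j; rewrite mxE; apply: lim_near_cst => //.
near=> m; rewrite -[m]prednK; last by near: m.
rewrite /series /= big_nat_recl // expr0 fact0 invr1 !mul1r big1 ?addr0 // => k _.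
by rewrite expr0n /= !mul0r.
Unshelve. all: by end_near. Qed.

Lemma mxpow_ge0 M k : (forall i j, 0 <= M i j) -> forall i j, 0 <= (M ^+ k) i j.
Proof.
move=> M_ge0; elim: k => [|k IHk] i j; first by rewrite expr0 mxE; case: (i == j).
by rewrite exprSr -mulmxE mxE; apply: sumr_ge0 => l _; apply: mulr_ge0.
Qed.

Lemma mxexp_ge0_of_ge0 M t : 0 <= t -> (forall i j, 0 <= M i j) ->
  forall i j, 0 <= mxexp M t i j.
Proof.
move=> t_ge0 M_ge0 i j; rewrite mxE.
apply: limr_ge; first exact: cvgP (cvg_mxexp M t i j).
near=> m; apply: sumr_ge0 => k _.
by rewrite mulr_ge0 ?divr_ge0 ?exprn_ge0 ?mxpow_ge0.
Unshelve. all: by end_near. Qed.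

End MatrixExponential.

Section MatrixDerivative.
Context {R : realType}.

Definition mx_is_derive {m p} (F dF : R -> 'M[R]_(m, p)) :=
  forall (t : R) i j, is_derive t (1 : R) (fun s => F s i j) (dF t i j).

Lemma mx_is_derive_eq {m p} {F dF dG : R -> 'M[R]_(m, p)} :
  mx_is_derive F dF -> dF =1 dG -> mx_is_derive F dG.
Proof. by move=> dFdF dFG t i j; rewrite -dFG. Qed.

Lemma mx_is_derive_cst {m p} (A : 'M[R]_(m, p)) : mx_is_derive (fun=> A) (fun=> 0).
Proof. by move=> t i j; rewrite mxE; apply: is_derive_cst. Qed.

Lemma mx_is_derive_mul {m n p} {F dF : R -> 'M[R]_(m, n)} {G dG : R -> 'M[R]_(n, p)} :
  mx_is_derive F dF -> mx_is_derive G dG ->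
  mx_is_derive (fun s => F s *m G s) (fun s => dF s *m G s + F s *m dG s).
Proof.
move=> dFdF dGdG t i j.
have -> : (fun s => (F s *m G s) i j) = \sum_l (fun s => F s i l * G s l j).
  by apply/funext => s; rewrite fct_sumE mxE.
rewrite !mxE -big_split /=; apply: is_derive_sum => l.
apply: is_derive_eq; first exact: is_deriveM (dFdF t i l) (dGdG t l j).
by rewrite /GRing.scale /=; ring.
Qed.

Lemma mx_is_derive_scale {m p} {f df : R -> R} {G dG : R -> 'M[R]_(m, p)} :
  (forall t : R, is_derive t (1 : R) f (df t)) -> mx_is_derive G dG ->
  mx_is_derive (fun s => f s *: G s) (fun s => df s *: G s + f s *: dG s).
Proof.
move=> dff dGdG t i j.
have -> : (fun s => (f s *: G s) i j) = f * (fun s => G s i j).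
  by apply/funext => s; rewrite mxE.
apply: is_derive_eq; first exact: is_deriveM (dff t) (dGdG t i j).
by rewrite !mxE /GRing.scale /=; ring.
Qed.

Lemma mx_is_derive0_cst {m p} {F : R -> 'M[R]_(m, p)} t :
  mx_is_derive F (fun=> 0) -> F t = F 0.
Proof.
move=> dF0; apply/matrixP => i j.
apply: (@is_derive_0_is_cst _ (fun s => F s i j)) => s.
by have := dF0 s i j; rewrite mxE.
Qed.

End MatrixDerivative.

Section MatrixExponentialODE.
Context {R : realType} {n : nat}.
Implicit Types (M : 'M[R]_n).

Lemma mx_is_derive_mxexpr M : mx_is_derive (mxexp M) (fun t => mxexp M t *m M).
Proof. by move=> t i j; rewrite -mxexp_derivE_mulmxr; apply: is_derive_mxexp_entry. Qed.

Lemma mx_is_derive_mxexpl M : mx_is_derive (mxexp M) (fun t => M *m mxexp M t).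
Proof. by move=> t i j; rewrite -mxexp_derivE_mulmxl; apply: is_derive_mxexp_entry. Qed.

Lemma mulmx_mxexpN {M} {X : R -> 'M[R]_n} t :
  mx_is_derive X (fun s => M *m X s) -> X 0 = 1%:M -> mxexp (- M) t *m X t = 1%:M.
Proof.
move=> dX X0.
have dP : mx_is_derive (fun s => mxexp (- M) s *m X s) (fun=> 0).
  apply: mx_is_derive_eq (mx_is_derive_mul (mx_is_derive_mxexpr (- M)) dX) _ => s.
  by rewrite mulmxN mulNmx mulmxA addNr.
by rewrite (mx_is_derive0_cst t dP) X0 mxexp0 mul1mx.
Qed.

Lemma mxexp_unique {M} {X : R -> 'M[R]_n} t :
  mx_is_derive X (fun s => M *m X s) -> X 0 = 1%:M -> X t = mxexp M t.
Proof.
move=> dX X0.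
have /mulmx1C inv_mxexp := mulmx_mxexpN t (mx_is_derive_mxexpl M) (mxexp0 M).
by rewrite -[X t]mul1mx -inv_mxexp -mulmxA (mulmx_mxexpN t dX X0) mulmx1.
Qed.

(* Shifting the diagonal by [c] multiplies [mxexp] by [expR (c t)], and a large
   enough shift makes a matrix with nonnegative off-diagonal entries nonnegative. *)
Lemma mxexp_ge0 M t : 0 <= t -> (forall i j, i != j -> 0 <= M i j) ->
  forall i j, 0 <= mxexp M t i j.
Proof.
move=> t_ge0 M_ge0; set c := mx_l1norm M.
have Mc_ge0 i j : 0 <= (M + c%:M) i j.
  rewrite !mxE; case: eqVneq => [<-|ij]; last by rewrite mulr0n addr0 M_ge0.
  have := mxentry_norm_le M i i; rewrite mulr1n ler_norml => /andP[Mii _].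
  by rewrite /c; lra.
have dexp (s : R) : is_derive s 1 (fun s => expR (- c * s)) (expR (- c * s) * - c).
  apply: (is_derive1_comp (f := expR) (g := fun s => - c * s)) (is_derive_expR _) _.
  by rewrite -[X in is_derive _ _ _ X]mulr1; apply: is_deriveZ (is_derive_id _ _).
pose X s := expR (- c * s) *: mxexp (M + c%:M) s.
have dX : mx_is_derive X (fun s => M *m X s).
  apply: mx_is_derive_eq (mx_is_derive_scale dexp (mx_is_derive_mxexpl _)) _ => s.
  rewrite mulmxDl mul_scalar_mx scalerDr -scalemxAr scalerA.
  by rewrite addrCA -scalerDl mulrN addNr scale0r addr0.
have X0 : X 0 = 1%:M by rewrite /X mulr0 expR0 scale1r mxexp0.
move=> i j; rewrite -(mxexp_unique t dX X0) mxE.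
by rewrite mulr_ge0 ?expR_ge0 ?mxexp_ge0_of_ge0.
Qed.

End MatrixExponentialODE.

Section IntegralBound.
Context {R : realType}.
Local Notation mu := (@lebesgue_measure R).

Lemma is_derive_continuous (f df : R -> R) :
  (forall t : R, is_derive t (1 : R) f (df t)) -> continuous f.
Proof.
move=> dff t; apply/differentiable_continuous/derivable1_diffP.
have dft := dff t; exact: ex_derive.
Qed.

Lemma nondecreasing_itvy_cvg (F : R -> R) (M : R) :
  (forall x y, 0 <= x -> x <= y -> F x <= F y) -> (forall t, 0 <= t -> F t <= M) ->
  exists2 l : R, (F x @[x --> +oo] --> l)%classic & l <= M.
Proof.
move=> F_ndecr F_ub; pose Fp t := F (Num.max 0 t).
have Fp_ndecr : nondecreasing_fun Fp.
  by move=> x y xy; apply: F_ndecr; [rewrite le_max lexx | apply: le_max2].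
have Fp_ub : has_ubound (range Fp).
  by exists M => _ [t _ <-]; apply: F_ub; rewrite le_max lexx.
have Fp_l := nondecreasing_cvgr Fp_ndecr Fp_ub.
exists (sup (range Fp)).
  apply: cvg_trans Fp_l; apply: near_eq_cvg.
  by near=> t; rewrite /Fp max_r //; near: t; apply: nbhs_pinfty_ge; rewrite num_real.
rewrite -(cvg_lim (@Rhausdorff R) Fp_l); apply: limr_le; first exact: cvgP Fp_l.
by near=> t; apply: F_ub; rewrite le_max lexx.
Unshelve. all: by end_near. Qed.

Lemma integral_itvy_le_of_is_derive (f g G : R -> R) :
  (forall t : R, is_derive t (1 : R) G (- g t)) -> continuous f -> continuous g ->
  (forall t, 0 <= t -> 0 <= f t <= g t) -> (forall t, 0 <= t -> 0 <= G t) ->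
  (\int[mu]_(t in `[0%R, +oo[%classic) (f t)%:E <= (G 0)%:E)%E.
Proof.
move=> dG cf cg fg G_ge0.
have g_ge0 t : 0 <= t -> 0 <= g t by move=> /fg /andP[f0 fg']; apply: le_trans fg'.
pose F t := - G t.
have dF t : is_derive t (1 : R) F (g t) by rewrite -[g t]opprK; apply: is_deriveN.
have F_ndecr x y : 0 <= x -> x <= y -> F x <= F y.
  apply: ger0_derive1_ndecry => [z _|z|].
  - by have dFz := dF z; apply: ex_derive.
  - by have dFz := dF z; rewrite in_itv /= andbT derive1E derive_val => /ltW /g_ge0.
  - exact/continuous_subspaceT/is_derive_continuous.
have [l F_l l_le0] : exists2 l : R, (F x @[x --> +oo] --> l)%classic & l <= 0.
  by apply: nondecreasing_itvy_cvg F_ndecr _ => t /G_ge0; rewrite oppr_le0.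
have le_fg : (\int[mu]_(t in `[0%R, +oo[%classic) (f t)%:E <=
    \int[mu]_(t in `[0%R, +oo[%classic) (g t)%:E)%E.
  apply: ge0_le_integral => //.
  - by move=> t; rewrite /= in_itv /= andbT => /fg /andP[]; rewrite lee_fin.
  - apply/measurable_realfun.measurable_EFinP/(measurable_funS measurableT) => //.
    exact: measurable_realfun.continuous_measurable_fun.
  - apply/measurable_realfun.measurable_EFinP/(measurable_funS measurableT) => //.
    exact: measurable_realfun.continuous_measurable_fun.
  - by move=> t; rewrite /= in_itv /= andbT => /fg /andP[_]; rewrite lee_fin.
apply: le_trans le_fg _; rewrite (@ge0_continuous_FTC2y _ g F 0 l) //.
- by rewrite /F -EFinB lee_fin; lra.
- exact: continuous_subspaceT.
- exact/cvg_at_right_filter/is_derive_continuous.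
- by move=> x _; have dFx := dF x; rewrite derive1E derive_val.
Qed.

End IntegralBound.

Lemma mxexp_lyapunov_integral_le {R : realType} {n : nat}
    {A : 'M[R]_n} {w h : 'cV[R]_n} :
  (forall i j, i != j -> 0 <= A i j) ->
  (forall i, 0 <= w i 0) -> (forall i, 0 <= h i 0) ->
  (forall i, w i 0 <= - (A *m h) i 0) ->
  forall i, (\int[@lebesgue_measure R]_(t in `[0%R, +oo[%classic)
              ((mxexp A t *m w) i 0)%:E <= (h i 0)%:E)%E.
Proof.
move=> A_ge0 w_ge0 h_ge0 w_le i.
have dexp := mx_is_derive_mxexpr A.
have dmul (v : 'cV[R]_n) :
    mx_is_derive (fun t => mxexp A t *m v) (fun t => mxexp A t *m A *m v).
  apply: mx_is_derive_eq (mx_is_derive_mul dexp (mx_is_derive_cst v)) _ => t.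
  by rewrite mulmx0 addr0.
have cont (v : 'cV[R]_n) : continuous (fun t => (mxexp A t *m v) i 0).
  by apply: is_derive_continuous => t; apply: dmul.
have entry_le (u v : 'cV[R]_n) t : 0 <= t -> (forall j, u j 0 <= v j 0) ->
    (mxexp A t *m u) i 0 <= (mxexp A t *m v) i 0.
  move=> t_ge0 uv; rewrite !mxE; apply: ler_sum => j _.
  by rewrite ler_wpM2l ?mxexp_ge0.
have entry_ge0 (v : 'cV[R]_n) t : 0 <= t -> (forall j, 0 <= v j 0) ->
    0 <= (mxexp A t *m v) i 0.
  move=> t_ge0 v_ge0; rewrite mxE; apply: sumr_ge0 => j _.
  by rewrite mulr_ge0 ?mxexp_ge0.
have -> : h i 0 = (mxexp A 0 *m h) i 0 by rewrite mxexp0 mul1mx.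
apply: (integral_itvy_le_of_is_derive _ (fun t => (mxexp A t *m - (A *m h)) i 0)
  (fun t => (mxexp A t *m h) i 0)) => [t|||t t_ge0|t t_ge0].
- by rewrite mulmxN mxE opprK mulmxA; apply: dmul.
- exact: cont.
- exact: cont.
- by rewrite entry_ge0 ?entry_le // => j; rewrite mxE.
- exact: entry_ge0.
Qed.

Lemma inLam_succ N z : inLam N z -> inLam N z.+1 = (z != N.-1).
Proof. by rewrite /inLam; lia. Qed.

Lemma inLam_pred N z : inLam N z -> inLam N z.-1 = (z != 1%N).
Proof. by rewrite /inLam; lia. Qed.

Section Generator.
Context {R : realType} (alpha alphaL alphaR beta : R) (N : nat).
Hypotheses (alpha_gt0 : 0 < alpha) (alphaL_gt0 : 0 < alphaL) (alphaR_gt0 : 0 < alphaR).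

Local Notation rate := (rate alpha alphaL alphaR beta N).
Local Notation gen := (gen alpha alphaL alphaR beta N).

Let bulk_rate : R := N%:R ^+ 2 * alpha.
Let exit_rateL : R := N%:R `^ (2 - beta) * alphaL.
Let exit_rateR : R := N%:R `^ (2 - beta) * alphaR.

Lemma rate_ge0 z k : 0 <= rate z k.
Proof.
rewrite /rate !addr_ge0 //; case: ifP => // _.
all: by rewrite mulr_ge0 ?exprn_ge0 ?powR_ge0 ?ler0n ?ltW.
Qed.

Lemma gen_offdiag_ge0 (i j : 'I_N.+1) : i != j -> 0 <= gen i j.
Proof. by move=> ij; rewrite mxE (negbTE ij) rate_ge0. Qed.

Lemma gen_row_eq0 (z k : 'I_N.+1) : ~~ inLam N z -> gen z k = 0.
Proof.
move=> zN; have rate_z0 (l : nat) : rate z l = 0 by rewrite /rate (negbTE zN) !addr0.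
by rewrite mxE; case: ifP => _; rewrite ?big1 ?oppr0 ?rate_z0.
Qed.

Lemma rate_eq0 (z k : nat) : k != z.+1 -> k != z.-1 -> rate z k = 0.
Proof.
rewrite /rate /inLam => kS kP.
by do !case: ifP => ?; rewrite ?addr0 ?add0r //; exfalso; lia.
Qed.

Lemma rate_succ (z : nat) : inLam N z ->
  rate z z.+1 = if z == N.-1 then exit_rateR else bulk_rate.
Proof.
rewrite /rate /inLam => zN.
by do !case: ifP => ?; rewrite ?addr0 ?add0r //; exfalso; lia.
Qed.

Lemma rate_pred (z : nat) : inLam N z ->
  rate z z.-1 = if z == 1%N then exit_rateL else bulk_rate.
Proof.
rewrite /rate /inLam => zN.
by do !case: ifP => ?; rewrite ?addr0 ?add0r //; exfalso; lia.
Qed.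

Lemma gen_mulmx_col (z : 'I_N.+1) (h : nat -> R) : inLam N z ->
  (gen *m \col_(k < N.+1) h k) z 0 =
    rate z z.+1 * (h z.+1 - h z) + rate z z.-1 * (h z.-1 - h z).
Proof.
rewrite /inLam => zN.
have gen_diff :
    (gen *m \col_(k < N.+1) h k) z 0 = \sum_(k < N.+1) rate z k * (h k - h z).
  rewrite mxE (bigD1 z) //= [RHS](bigD1 z) //= subrr mulr0 add0r !mxE eqxx.
  under eq_bigr => k zk do rewrite !mxE eq_sym (negbTE zk).
  under [in RHS]eq_bigr => k _ do rewrite mulrBr.
  by rewrite sumrB -big_distrl /= mulNr addrC.
have zS : (z.+1 < N.+1)%N by lia.
have zP : (z.-1 < N.+1)%N by lia.
rewrite gen_diff (bigD1 (Ordinal zS)) // (bigD1 (Ordinal zP)) /=; last first.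
  by apply/eqP => /(congr1 val) /=; lia.
rewrite big1 ?addr0 ?addrA // => k /andP[kS kP].
by rewrite rate_eq0 ?mul0r.
Qed.

Lemma sum_ptrans_inLam (t : R) (x : 'I_N.+1) :
  \sum_(y < N.+1 | inLam N y) ptrans alpha alphaL alphaR beta N t x y =
    (mxexp gen t *m \col_y (inLam N y)%:R) x 0.
Proof.
rewrite mxE big_mkcond /=; apply: eq_bigr => y _; rewrite !mxE.
by case: (inLam N y); rewrite ?mulr1 ?mulr0.
Qed.

(* The bulk generator maps the parabola [u (N - u) / (2 N^2 alpha)] to [-1]; the
   constant [lyap_shift] pays for the exits through [0] and [N]. *)
Let lyap_shift : R := (N%:R + 1) / 2 * (exit_rateL^-1 + exit_rateR^-1).

Definition lyap_poly (u : R) : R := u * (N%:R - u) / (2 * bulk_rate) + lyap_shift.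

Definition lyap (k : nat) : R := if inLam N k then lyap_poly k%:R else 0.

Section LyapunovFunction.
Hypothesis N_gt1 : (1 < N)%N.

Let N_gt0 : 0 < N%:R :> R. Proof. by rewrite ltr0n; lia. Qed.

Let bulk_rate_gt0 : 0 < bulk_rate.
Proof. by rewrite mulr_gt0 ?exprn_gt0. Qed.

Let exit_rateL_gt0 : 0 < exit_rateL.
Proof. by rewrite mulr_gt0 ?powR_gt0. Qed.

Let exit_rateR_gt0 : 0 < exit_rateR.
Proof. by rewrite mulr_gt0 ?powR_gt0. Qed.

Let lyap_shift_ge0 : 0 <= lyap_shift.
Proof. by rewrite mulr_ge0 ?divr_ge0 ?addr_ge0 ?invr_ge0 ?ltW. Qed.

Let exit_rateL_lyap_shift : (N%:R + 1) / 2 <= exit_rateL * lyap_shift.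
Proof.
rewrite /lyap_shift mulrCA mulrDr mulfV ?gt_eqF // mulrDr mulr1 lerDl.
by rewrite mulr_ge0 ?divr_ge0 ?addr_ge0 ?ltW.
Qed.

Let exit_rateR_lyap_shift : (N%:R + 1) / 2 <= exit_rateR * lyap_shift.
Proof.
rewrite /lyap_shift mulrCA mulrDr [exit_rateR / exit_rateR]mulfV ?gt_eqF //.
rewrite mulrDr mulr1 lerDr.
by rewrite mulr_ge0 ?divr_ge0 ?addr_ge0 ?ltW.
Qed.

Let lyap_poly_succ u :
  bulk_rate * (lyap_poly (u + 1) - lyap_poly u) = (N%:R - 2 * u - 1) / 2.
Proof. by rewrite /lyap_poly; field; rewrite gt_eqF. Qed.

Let lyap_poly_pred u :
  bulk_rate * (lyap_poly (u - 1) - lyap_poly u) = (2 * u - N%:R - 1) / 2.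
Proof. by rewrite /lyap_poly; field; rewrite gt_eqF. Qed.

Let lyap_shift_le_poly u : 0 <= u <= N%:R -> lyap_shift <= lyap_poly u.
Proof.
case/andP=> u_ge0 u_le; rewrite /lyap_poly lerDr.
by rewrite divr_ge0 ?mulr_ge0 ?subr_ge0 // ltW ?mulr_gt0.
Qed.

Lemma lyap_ge0 k : 0 <= lyap k.
Proof.
rewrite /lyap /inLam; case: ifP => // /andP[_ kN].
apply: le_trans lyap_shift_ge0 _; apply: lyap_shift_le_poly.
by rewrite ler0n ler_nat ltnW.
Qed.

Let lyap_step_succ (z : nat) : inLam N z ->
  rate z z.+1 * (lyap z.+1 - lyap z) <= (N%:R - 2 * z%:R - 1) / 2.
Proof.
move=> zN; have [_ zN'] := andP zN.
have lyap_z : lyap_shift <= lyap_poly z%:R.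
  by apply: lyap_shift_le_poly; rewrite ler0n ler_nat ltnW.
rewrite rate_succ // {2}/lyap zN /lyap inLam_succ //; case: eqVneq => [zN1|_] /=.
  have z_eq : z%:R + 1 = N%:R :> R by rewrite natr1 zN1 prednK // ltnW.
  have := ler_wpM2l (ltW exit_rateR_gt0) lyap_z.
  by have := exit_rateR_lyap_shift; lra.
by rewrite -natr1 lyap_poly_succ.
Qed.

Let lyap_step_pred (z : nat) : inLam N z ->
  rate z z.-1 * (lyap z.-1 - lyap z) <= (2 * z%:R - N%:R - 1) / 2.
Proof.
move=> zN; have [z_gt0 zN'] := andP zN.
have lyap_z : lyap_shift <= lyap_poly z%:R.
  by apply: lyap_shift_le_poly; rewrite ler0n ler_nat ltnW.
rewrite rate_pred // {2}/lyap zN /lyap inLam_pred //; case: eqVneq => [z1|_] /=.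
  have := ler_wpM2l (ltW exit_rateL_gt0) lyap_z.
  by have := exit_rateL_lyap_shift; rewrite z1; lra.
by rewrite -subn1 natrB // lyap_poly_pred.
Qed.

Let gen_lyap_le (z : 'I_N.+1) : inLam N z -> (gen *m \col_k lyap k) z 0 <= -1.
Proof.
move=> zN; rewrite gen_mulmx_col //.
by have := lyap_step_succ _ zN; have := lyap_step_pred _ zN; lra.
Qed.

Lemma lyap_drift_le (y : 'I_N.+1) : (inLam N y)%:R <= - (gen *m \col_k lyap k) y 0.
Proof.
case: (boolP (inLam N y)) => yN; first by rewrite lerNr gen_lyap_le.
by rewrite mxE big1 ?oppr0 // => k _; rewrite gen_row_eq0 ?mul0r.
Qed.

Let lyap_shift_le : lyap_shift <= N%:R `^ (beta - 1) * (alphaL^-1 + alphaR^-1).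
Proof.
have -> : N%:R `^ (beta - 1) = N%:R `^ (beta - 2) * N%:R.
  rewrite (_ : beta - 1 = (beta - 2) + 1); last by ring.
  by rewrite powRD ?(gt_eqF N_gt0) ?implybT // powRr1 // ltW.
rewrite /lyap_shift /exit_rateL /exit_rateR !invfM -!powRN opprB -mulrDr mulrA.
apply: ler_wpM2r; first by rewrite addr_ge0 // invr_ge0 ltW.
rewrite [_ * N%:R]mulrC; apply: ler_wpM2r; first exact: powR_ge0.
have N_ge1 : 1 <= N%:R :> R by rewrite ler1n ltnW.
by rewrite ler_pdivrMr //; lra.
Qed.

Lemma lyap_le (x : nat) : inLam N x ->
  lyap x <= (alpha^-1 + alphaL^-1 + alphaR^-1) * Num.max 1 (N%:R `^ (beta - 1)).
Proof.
move=> xN; have [_ xN'] := andP xN; rewrite /lyap xN /lyap_poly.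
set p := N%:R `^ (beta - 1); set M := Num.max 1 p.
have bulk_le : x%:R * (N%:R - x%:R) / (2 * bulk_rate) <= alpha^-1.
  rewrite ler_pdivrMr ?mulr_gt0 // (_ : alpha^-1 * _ = 2 * N%:R ^+ 2); last first.
    by rewrite /bulk_rate; field; rewrite gt_eqF.
  have x_le : x%:R <= N%:R :> R by rewrite ler_nat ltnW.
  have x_ge0 : 0 <= x%:R :> R by rewrite ler0n.
  nra.
have M_ge1 : 1 <= M by rewrite le_max lexx.
have M_gep : p <= M by rewrite le_max lexx orbT.
apply: le_trans (lerD bulk_le lyap_shift_le) _; rewrite -addrA mulrDl lerD //.
  by rewrite ler_peMr // invr_ge0 ltW.
by rewrite mulrC; apply: ler_wpM2l => //; rewrite addr_ge0 // invr_ge0 ltW.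
Qed.

End LyapunovFunction.

End Generator.

Theorem lemmaB1 (R : realType) (alpha alphaL alphaR : R)
  (halpha : 0 < alpha) (halphaL : 0 < alphaL) (halphaR : 0 < alphaR) :
  exists C : R, 0 < C /\
    forall (beta : R) (N : nat) (x : 'I_N.+1), inLam N x ->
      (\int[@lebesgue_measure R]_(t in `[0%R, +oo[%classic)
          (\sum_(y < N.+1 | inLam N y) ptrans alpha alphaL alphaR beta N (t : R) x y)%:E
        <= (C * Num.max 1 ((N%:R) `^ (beta - 1)))%:E)%E.
Proof.
exists (alpha^-1 + alphaL^-1 + alphaR^-1); split; first by rewrite !addr_gt0 ?invr_gt0.
move=> beta N x xN; have N_gt1 : (1 < N)%N by move: xN; rewrite /inLam; lia.
under eq_integral => t _ do rewrite sum_ptrans_inLam.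
set A := gen alpha alphaL alphaR beta N; set ind := \col_y _.
pose h : 'cV[R]_N.+1 := \col_k lyap alpha alphaL alphaR beta N k.
have A_ge0 : forall i j, i != j -> 0 <= A i j by exact: gen_offdiag_ge0.
have ind_ge0 y : 0 <= ind y 0 by rewrite mxE ler0n.
have h_ge0 y : 0 <= h y 0 by rewrite mxE lyap_ge0.
have drift y : ind y 0 <= - (A *m h) y 0 by rewrite mxE lyap_drift_le.
apply: le_trans (mxexp_lyapunov_integral_le A_ge0 ind_ge0 h_ge0 drift x) _.
by rewrite lee_fin mxE lyap_le.
Qed.
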